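(* Let $f(\mathbf{x};\boldsymbol{\theta})=g(\mathbf{W}\mathbf{x};\bar{\boldsymbol{\theta}})$ be a network from $\mathbb{R}^{P}$ to $\mathbb{R}^{N}$ whose first layer is linear with weight $\mathbf{W}\in\mathbb{R}^{d\times P}$, with parameter vector $\boldsymbol{\theta}=(\theta_1,\dots,\theta_m)$ consisting of the entries of $\mathbf{W}$ together with the remaining parameters $\bar{\boldsymbol{\theta}}$, and $g$ differentiable in its first argument and twice differentiable in the parameters. Let $(\mathbf{x}_i,\mathbf{y}_i)_{i=1}^n$ be training data, with $x^{(i)}_p$ the $p$-th entry of $\mathbf{x}_i$. Suppose $\varepsilon,M_0>0$ are such that $\|f(\mathbf{x}_i,\boldsymbol{\theta})-\mathbf{y}_i\|_2<\varepsilon$ for all $i$ and $|\theta_j|^2\|\partial^2 f(\mathbf{x}_i,\boldsymbol{\theta})/\partial\theta_j^2\|_2<M_0$ for all $i,j$. Then $$\frac1n\sum_{i=1}^n\sum_{j=1}^m|\theta_j|^2\Big\|\frac{\partial f(\mathbf{x}_i,\boldsymbol{\theta})}{\partial\theta_j}\Big\|_2^2\;\ge\;\frac{1}{nd}\sum_{i=1}^n\sum_{p=1}^{P}\Big\|\frac{\partial f(\mathbf{x}_i,\boldsymbol{\theta})}{\partial x_p}\Big\|_2^2\,(x_p^{(i)})^2.$$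
   Context: The right-hand side, $\frac1n\sum_i\sum_p\|\partial f/\partial x_p(\mathbf{x}_i)\|_2^2 (x_p^{(i)})^2$, is called the input-invariant MLS (up to the factor $1/d$); the left-hand side is, up to $O(\varepsilon)$, the elementwise-adaptive sharpness $\operatorname{Tr}(\nabla^2_{\boldsymbol{\theta}}L(\boldsymbol{\theta})\odot|\boldsymbol{\theta}||\boldsymbol{\theta}|^T)$ of the MSE loss $L(\boldsymbol{\theta})=\frac1n\sum_i\frac12\|f(\mathbf{x}_i,\boldsymbol{\theta})-\mathbf{y}_i\|_2^2$. Here $d$ is the number of rows of the first-layer weight matrix $\mathbf{W}$. *)

From HB Require Import structures.
From mathcomp Require Import all_boot all_order all_algebra.
From mathcomp Require Import all_classical all_reals all_analysis.
Set Implicit Arguments. Unset Strict Implicit. Unset Printing Implicit Defensive.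
Import Order.TTheory GRing.Theory Num.Theory.
Import numFieldNormedType.Exports.
Local Open Scope ring_scope.

Section Defs.
Variable R : realType.

Definition sqnorm2 (N : nat) (v : 'rV[R]_N) : R := \sum_(i < N) v 0 i ^+ 2.
Definition norm2 (N : nat) (v : 'rV[R]_N) : R := Num.sqrt (sqnorm2 v).

(* The network f(x; W, tb) = g(W x; tb), with x written as a row vector,
   so that W x corresponds to x *m W^T : 'rV_d. *)
Definition net (d P q N : nat) (g : 'rV[R]_d -> 'rV[R]_q -> 'rV[R]_N)
  (x : 'rV[R]_P) (W : 'M[R]_(d, P)) (tb : 'rV[R]_q) : 'rV[R]_N :=
  g (x *m W^T) tb.

Definition dW (d P q N : nat) g x (W : 'M[R]_(d, P)) (tb : 'rV[R]_q)
  (k : 'I_d) (p : 'I_P) : 'rV[R]_N :=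
  'D_(delta_mx k p) (fun W' => @net d P q N g x W' tb) W.
Definition dtb (d P q N : nat) g x (W : 'M[R]_(d, P)) (tb : 'rV[R]_q)
  (l : 'I_q) : 'rV[R]_N :=
  'D_(delta_mx 0 l) (fun t => @net d P q N g x W t) tb.
Definition dx (d P q N : nat) g (x : 'rV[R]_P) (W : 'M[R]_(d, P))
  (tb : 'rV[R]_q) (p : 'I_P) : 'rV[R]_N :=
  'D_(delta_mx 0 p) (fun y => @net d P q N g y W tb) x.

Definition d2W (d P q N : nat) g x (W : 'M[R]_(d, P)) (tb : 'rV[R]_q)
  (k : 'I_d) (p : 'I_P) : 'rV[R]_N :=
  'D_(delta_mx k p) (fun W' => @dW d P q N g x W' tb k p) W.
Definition d2tb (d P q N : nat) g x (W : 'M[R]_(d, P)) (tb : 'rV[R]_q)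
  (l : 'I_q) : 'rV[R]_N :=
  'D_(delta_mx 0 l) (fun t => @dtb d P q N g x W t l) tb.

End Defs.

From HB Require Import structures.
From mathcomp Require Import all_boot all_order all_algebra.
From mathcomp Require Import all_classical all_reals all_analysis.
From mathcomp Require Import ring.
Import Order.TTheory GRing.Theory Num.Theory.
Import numFieldNormedType.Exports.
Set Implicit Arguments.
Unset Strict Implicit.
Unset Printing Implicit Defensive.
Local Open Scope ring_scope.

(* Since the first layer is linear, the chain rule gives
   df/dW_kp = x_p J e_k and df/dx_p = sum_k W_kp J e_k with J the Jacobian of
   g in its first argument, hence x_p df/dx_p = sum_k W_kp df/dW_kp.  By
   Cauchy-Schwarz, |x_p|^2 |df/dx_p|^2 <= d sum_k |W_kp|^2 |df/dW_kp|^2; summing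
   over p and the samples and dropping the nonnegative terms of the remaining
   parameters gives the inequality. *)

Lemma derive_comp_linear (R : numFieldType) (U V X : normedModType R)
    (A : U -> V) (h : V -> X) (a v : U) :
  linear A -> 'D_v (h \o A) a = 'D_(A v) h (A a).
Proof.
move=> linA; rewrite /derive; do 2 f_equal; apply: funext => t /=.
by rewrite linA.
Qed.

(* Also for d = 0, thanks to the convention 0^-1 = 0. *)
Lemma invn_mul_le (R : numFieldType) (d : nat) (a b : R) :
  0 <= a -> b <= d%:R * a -> d%:R^-1 * b <= a.
Proof.
have [->|d_gt0] := posnP d; first by move=> a_ge0 _; rewrite invr0 mul0r.
by move=> _; rewrite ler_pdivrMl ?ltr0n.
Qed.

Lemma sqr_sum_le (R : realFieldType) d (a : 'I_d -> R) :
  (\sum_k a k) ^+ 2 <= d%:R * \sum_k a k ^+ 2.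
Proof.
have sum_sqr_diff_ge0 : 0 <= \sum_(k < d) \sum_(l < d) (a k - a l) ^+ 2.
  by apply: sumr_ge0 => k _; apply: sumr_ge0 => l _; rewrite sqr_ge0.
have sum_const_sqr : \sum_(k < d) \sum_(l < d) a l ^+ 2 = d%:R * \sum_k a k ^+ 2.
  by rewrite sumr_const card_ord mulr_natl.
have sqr_sum : \sum_(k < d) \sum_(l < d) a k * a l = (\sum_k a k) ^+ 2.
  by rewrite expr2 mulr_suml; apply: eq_bigr => k _; rewrite mulr_sumr.
have expand : \sum_(k < d) \sum_(l < d) (a k - a l) ^+ 2
    = (d%:R * \sum_k a k ^+ 2 - (\sum_k a k) ^+ 2) *+ 2.
  rewrite -sum_const_sqr -sqr_sum mulr2n -{1}[\sum_k \sum_l a l ^+ 2]exchange_big /=.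
  rewrite -!sumrB -big_split /=; apply: eq_bigr => k _.
  rewrite -!sumrB -big_split /=; apply: eq_bigr => l _.
  by rewrite sqrrB; ring.
by move: sum_sqr_diff_ge0; rewrite expand pmulrn_lge0 // subr_ge0.
Qed.

Section SquaredNorm.
Variable R : realType.

Lemma sqnorm2_ge0 N (v : 'rV[R]_N) : 0 <= sqnorm2 v.
Proof. by apply: sumr_ge0 => i _; rewrite sqr_ge0. Qed.

Lemma sqnorm2Z N (c : R) (v : 'rV[R]_N) : sqnorm2 (c *: v) = c ^+ 2 * sqnorm2 v.
Proof. by rewrite /sqnorm2 mulr_sumr; apply: eq_bigr => i _; rewrite mxE exprMn. Qed.

Lemma sqnorm2_sum_le d N (v : 'I_d -> 'rV[R]_N) :
  sqnorm2 (\sum_k v k) <= d%:R * \sum_k sqnorm2 (v k).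
Proof.
rewrite /sqnorm2 exchange_big mulr_sumr; apply: ler_sum => j _.
by rewrite summxE; apply: sqr_sum_le.
Qed.

End SquaredNorm.

Section FirstLayerChainRule.
Variables (R : realType) (d P q N : nat) (g : 'rV[R]_d -> 'rV[R]_q -> 'rV[R]_N).
Variables (x : 'rV[R]_P) (W : 'M[R]_(d, P)) (tb : 'rV[R]_q).
Hypothesis g_differentiable : differentiable (g ^~ tb) (x *m W^T).

Let J (k : 'I_d) : 'rV[R]_N := 'd (g ^~ tb) (x *m W^T) (delta_mx 0 k).

Lemma mul_tr_delta_mx (k : 'I_d) (p : 'I_P) :
  x *m (delta_mx k p)^T = x 0 p *: delta_mx 0 k.
Proof.
rewrite trmx_delta; apply/rowP => j; rewrite !mxE (bigD1 p) //= big1.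
  by rewrite !mxE eqxx addr0.
by move=> i /negbTE neq_ip; rewrite !mxE neq_ip mulr0.
Qed.

Lemma dW_chain k p : dW g x W tb k p = x 0 p *: J k.
Proof.
rewrite /dW /net (@derive_comp_linear _ _ _ _ (fun W' => x *m W'^T) (g ^~ tb)).
  by rewrite deriveE // mul_tr_delta_mx linearZ.
by move=> c W1 W2; rewrite linearD linearZ /= mulmxDr scalemxAr.
Qed.

Lemma dx_chain p : dx g x W tb p = \sum_k W k p *: J k.
Proof.
rewrite /dx /net (@derive_comp_linear _ _ _ _ (fun y => y *m W^T) (g ^~ tb)).
  rewrite deriveE // -rowE [row p W^T]row_sum_delta linear_sum /=.
  by apply: eq_bigr => k _; rewrite linearZ /= !mxE.
by move=> c y1 y2; rewrite mulmxDl scalemxAl.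
Qed.

Lemma scale_dx_sum_dW p : x 0 p *: dx g x W tb p = \sum_k W k p *: dW g x W tb k p.
Proof.
rewrite dx_chain scaler_sumr; apply: eq_bigr => k _.
by rewrite dW_chain !scalerA mulrC.
Qed.

Lemma input_sensitivity_le :
  \sum_(p < P) sqnorm2 (dx g x W tb p) * x 0 p ^+ 2
    <= d%:R * \sum_(k < d) \sum_(p < P) W k p ^+ 2 * sqnorm2 (dW g x W tb k p).
Proof.
rewrite exchange_big /= mulr_sumr; apply: ler_sum => p _.
rewrite mulrC -sqnorm2Z scale_dx_sum_dW.
under [X in _ <= _ * X]eq_bigr => k _ do rewrite -sqnorm2Z.
exact: sqnorm2_sum_le.
Qed.

End FirstLayerChainRule.

Theorem proposition5 (R : realType) (n d P q N : nat)
  (g : 'rV[R]_d -> 'rV[R]_q -> 'rV[R]_N)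
  (W : 'M[R]_(d, P)) (tb : 'rV[R]_q)
  (xs : 'I_n -> 'rV[R]_P) (ys : 'I_n -> 'rV[R]_N) (eps M0 : R)
  (* g differentiable in its first argument *)
  (Hg1 : forall (z : 'rV[R]_d) (t : 'rV[R]_q), differentiable (g ^~ t) z)
  (* g twice differentiable in the parameters *)
  (Hg2 : forall (z : 'rV[R]_d) (t : 'rV[R]_q),
      differentiable (g z) t /\
      forall v : 'rV[R]_q, differentiable (fun t' => 'D_v (g z) t') t)
  (Heps : 0 < eps) (HM0 : 0 < M0)
  (Hfit : forall i, norm2 (net g (xs i) W tb - ys i) < eps)
  (HcurvW : forall i k p,
      W k p ^+ 2 * norm2 (d2W g (xs i) W tb k p) < M0)
  (Hcurvtb : forall i l,
      tb 0 l ^+ 2 * norm2 (d2tb g (xs i) W tb l) < M0) :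
  (n%:R)^-1 * \sum_(i < n)
      ((\sum_(k < d) \sum_(p < P) W k p ^+ 2 * sqnorm2 (dW g (xs i) W tb k p))
       + \sum_(l < q) tb 0 l ^+ 2 * sqnorm2 (dtb g (xs i) W tb l))
  >= ((n * d)%:R)^-1 * \sum_(i < n) \sum_(p < P)
        sqnorm2 (dx g (xs i) W tb p) * xs i 0 p ^+ 2.
Proof.
rewrite natrM invfM -mulrA ler_wpM2l ?invr_ge0 ?ler0n // mulr_sumr.
apply: ler_sum => i _.
have weight_term_ge0 :
    0 <= \sum_(k < d) \sum_(p < P) W k p ^+ 2 * sqnorm2 (dW g (xs i) W tb k p).
  by apply: sumr_ge0 => k _; apply: sumr_ge0 => p _; rewrite mulr_ge0 ?sqr_ge0 ?sqnorm2_ge0.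
have other_terms_ge0 :
    0 <= \sum_(l < q) tb 0 l ^+ 2 * sqnorm2 (dtb g (xs i) W tb l).
  by apply: sumr_ge0 => l _; rewrite mulr_ge0 ?sqr_ge0 ?sqnorm2_ge0.
apply: le_trans (invn_mul_le weight_term_ge0 (input_sensitivity_le (Hg1 _ _))) _.
by rewrite lerDl.
Qed.
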